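(* For every $n \ge 1$ there exists a directed graph $G$ on $3n$ vertices (with a suitable weight function) such that any path-comparison based algorithm which correctly computes betweenness centrality of all vertices on every input weight function for $G$ must perform at least $n^3/2$ path weight comparisons on some weight function for $G$.
   Context: A path-comparison based algorithm accepts as input a graph $G$ and an edge-weight function; it may perform all standard operations, but the only way it can access the edge weights is by comparing the total weights of two different paths. For a (directed) graph with positive edge weights, $\lambda_{st}$ denotes the number of shortest (minimum total weight) paths from $s$ to $t$, $\lambda_{st}(v)$ the number of those passing through $v$, and the betweenness centrality of $v$ is $BC(v)=\sum_{s,t:\, s\neq v\neq t} \lambda_{st}(v)/\lambda_{st}$ (sum over pairs with $t$ reachable from $s$). *)

From HB Require Import structures.
From mathcomp Require Import all_boot all_order all_algebra.
Set Implicit Arguments. Unset Strict Implicit. Unset Printing Implicit Defensive.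
Import Order.TTheory GRing.Theory Num.Theory.
Local Open Scope ring_scope.

Definition gpath (V : eqType) (e : rel V) (p : seq V) : bool :=
  if p is x :: q then path e x q && uniq p else false.

Definition gpath_st (V : eqType) (e : rel V) (s t : V) (p : seq V) : bool :=
  [&& gpath e p, head s p == s & last s p == t].

Definition pweight (R : nmodType) (V : Type) (w : V -> V -> R) (p : seq V) : R :=
  \sum_(xy <- zip p (behead p)) w xy.1 xy.2.

Definition pos_weight (R : numDomainType) (V : Type) (e : rel V)
  (w : V -> V -> R) : Prop := forall u v, e u v -> 0 < w u v.

(* all sequences of length at most k over a finite type (each exactly once);
   every simple path of a graph on V occurs in allseqs #|V| *)
Fixpoint allseqs (V : finType) (k : nat) : seq (seq V) :=
  if k is k'.+1 then [::] :: [seq x :: s | x <- enum V, s <- allseqs V k']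
  else [:: [::]].

Section BC.
Variables (R : realFieldType) (V : finType) (e : rel V) (w : V -> V -> R).

Definition candidates : seq (seq V) := allseqs V #|V|.

Definition is_shortest (s t : V) (p : seq V) : bool :=
  gpath_st e s t p &&
  all (fun q => gpath_st e s t q ==> (pweight w p <= pweight w q)) candidates.

Definition nsp (s t : V) : nat := count (is_shortest s t) candidates.

Definition nsp_via (s t v : V) : nat :=
  count (fun p => is_shortest s t p && (v \in p)) candidates.

Definition BC (v : V) : rat :=
  \sum_(s : V | s != v) \sum_(t : V | (t != v) && (0 < nsp s t)%N)
     ((nsp_via s t v)%:R / (nsp s t)%:R).
End BC.

Inductive cmp_res := CmpLt | CmpEq | CmpGt.

Definition cmpR (R : realFieldType) (x y : R) : cmp_res :=
  if x < y then CmpLt else if x == y then CmpEq else CmpGt.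

Inductive step (V : Type) :=
  | Ask of seq V & seq V
  | Answer of (V -> rat).
Arguments Ask {V}. Arguments Answer {V}.

(* A deterministic path-comparison based algorithm on a fixed graph: all
   the algorithm may depend on is the graph (fixed) and the outcomes of the
   comparisons made so far, so it is a strategy mapping the history of
   comparison outcomes to its next step (an arbitrary, possibly infinite,
   adaptive decision tree). *)
Definition strategy (V : Type) := seq cmp_res -> step V.

Fixpoint hist (R : realFieldType) (V : Type) (A : strategy V)
  (w : V -> V -> R) (k : nat) : seq cmp_res :=
  if k is k'.+1 then
    let h := hist A w k' in
    match A h with
    | Ask p q => rcons h (cmpR (pweight w p) (pweight w q))
    | Answer _ => h
    end
  else [::].

Definition halts_with (R : realFieldType) (V : Type) (A : strategy V)
  (w : V -> V -> R) (k : nat) (b : V -> rat) : Prop :=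
  (forall i, (i < k)%N -> exists p q, A (hist A w i) = Ask p q) /\
  A (hist A w k) = Answer b.

Definition compares_paths (R : realFieldType) (V : finType) (e : rel V)
  (A : strategy V) : Prop :=
  forall (w : V -> V -> R), pos_weight e w ->
  forall i p q, A (hist A w i) = Ask p q -> [/\ gpath e p, gpath e q & p != q].

Definition computes_BC (R : realFieldType) (V : finType) (e : rel V)
  (A : strategy V) : Prop :=
  forall (w : V -> V -> R), pos_weight e w ->
  exists k b, halts_with A w k b /\ forall v, b v = BC e w v.

(* The graph has three layers a_i, b_j, c_k (i, j, k < n) and an arc from each
   vertex to each vertex of every higher layer.  We build a base weight
   function w0 and, for every triple t = (i, j, k), a perturbation w_t of it
   such that
   (1) w0 and w_t compare any two paths other than the triangle a_i b_j c_k
       alike: both order paths by a fixed rank (span, then middle column);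
   (2) the shortest paths of w0 and w_t differ only between a_i and c_k: the
       arc a_i c_k for w0, the triangle for w_t; so BC(b_j) gains exactly 1.
   Adversary argument: a run making k comparisons on w0 inspects at most 2k
   paths; if 2k < n^3 some triangle is never inspected, so the run on w_t is
   the same and outputs the same values, although BC(b_j) differs. *)

From HB Require Import structures.
From mathcomp Require Import all_boot all_order all_algebra zify.
Set Implicit Arguments. Unset Strict Implicit. Unset Printing Implicit Defensive.
Import Order.TTheory GRing.Theory Num.Theory.

Section Adversary.
Variables (R : realFieldType) (V : finType) (A : strategy V).

Definition queried (w : V -> V -> R) (k : nat) : seq (seq V) :=
  flatten [seq if A (hist A w i) is Ask p q then [:: p; q] else [::]
          | i <- iota 0 k].

Lemma size_queried w k : (size (queried w k) <= 2 * k)%N.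
Proof.
rewrite /queried -[X in (_ <= 2 * X)%N](size_iota 0 k).
elim: (iota 0 k) => //= i s IH; rewrite size_cat mulnS leq_add //.
by case: (A _).
Qed.

Lemma mem_queried w k i p q : (i < k)%N -> A (hist A w i) = Ask p q ->
  (p \in queried w k) && (q \in queried w k).
Proof.
move=> ik ask; apply/andP; split; apply/flatten_mapP;
  by exists i; rewrite ?mem_iota ?ask ?inE ?eqxx ?orbT.
Qed.

Lemma queried_gpath (e : rel V) w k p :
  compares_paths R e A -> pos_weight e w -> p \in queried w k -> gpath e p.
Proof.
move=> cmpA wpos /flatten_mapP[i _]; case ask: (A _) => [p1 p2|//].
by have [g1 g2 _] := cmpA w wpos i p1 p2 ask; rewrite !inE => /orP[]/eqP->.
Qed.

Lemma hist_agree (w w' : V -> V -> R) k :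
  {in queried w k &, forall p q,
     cmpR (pweight w p) (pweight w q) = cmpR (pweight w' p) (pweight w' q)} ->
  forall i, (i <= k)%N -> hist A w' i = hist A w i.
Proof.
move=> agree; elim=> [//|i IH] ik /=.
rewrite IH; last exact: ltnW.
case ask: (A _) => [p q|//].
by case/andP: (mem_queried ik ask) => pQ qQ; rewrite agree.
Qed.

Lemma halts_with_agree (w w' : V -> V -> R) k b :
  {in queried w k &, forall p q,
     cmpR (pweight w p) (pweight w q) = cmpR (pweight w' p) (pweight w' q)} ->
  halts_with A w k b -> halts_with A w' k b.
Proof.
move=> agree [asks stop]; have same := hist_agree agree.
by split=> [i ik|]; rewrite same //; [apply: asks | exact: ltnW].
Qed.

Lemma halts_with_unique (w : V -> V -> R) k b k' b' :
  halts_with A w k b -> halts_with A w k' b' -> b = b'.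
Proof.
move=> [asks stop] [asks' stop']; case: (ltngtP k k') => [lt|gt|eq_k]; last subst k'.
- by have [p [q ask]] := asks' _ lt; rewrite ask in stop.
- by have [p [q ask]] := asks _ gt; rewrite ask in stop'.
- by move: stop'; rewrite stop => -[].
Qed.

End Adversary.

Lemma exists_missed (T : finType) (X : eqType) (f : T -> X) (s : seq X) :
  injective f -> (size s < #|T|)%N -> exists x, f x \notin s.
Proof.
move=> f_inj small; apply/existsP; rewrite -negb_forall; apply/forallP => all_in.
have : (#|T| <= size s)%N.
  rewrite cardE -(size_map f); apply: uniq_leq_size => [|_ /mapP[x _ ->]].
    by rewrite map_inj_uniq ?enum_uniq.
  exact: all_in.
by rewrite leqNgt small.
Qed.

Local Open Scope ring_scope.

Section Betweenness.
Variables (R : realFieldType) (V : finType) (e : rel V).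

Definition bc_term (w : V -> V -> R) (s t v : V) : rat :=
  if (0 < nsp e w s t)%N then (nsp_via e w s t v)%:R / (nsp e w s t)%:R else 0.

Lemma BCE (w : V -> V -> R) v :
  BC e w v = \sum_(s | s != v) \sum_(t | t != v) bc_term w s t v.
Proof. by apply: eq_bigr => s _; rewrite big_mkcondr. Qed.

Lemma shortest_ext (w w' : V -> V -> R) s t :
  {in [pred p | gpath_st e s t p] &, forall p q,
     (pweight w p <= pweight w q) = (pweight w' p <= pweight w' q)} ->
  is_shortest e w s t =1 is_shortest e w' s t.
Proof.
move=> le_eq p; rewrite /is_shortest; case: (boolP (gpath_st e s t p)) => //= st_p.
by apply: eq_all => q; case: (boolP (gpath_st e s t q)) => //= st_q; rewrite le_eq.
Qed.

Lemma bc_term_ext (w w' : V -> V -> R) s t v :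
  is_shortest e w s t =1 is_shortest e w' s t -> bc_term w s t v = bc_term w' s t v.
Proof.
move=> same; have same_via : (fun p => is_shortest e w s t p && (v \in p)) =1
                             (fun p => is_shortest e w' s t p && (v \in p)).
  by move=> p; rewrite same.
by rewrite /bc_term /nsp /nsp_via (eq_count same) (eq_count same_via).
Qed.

Lemma BC_local_change (w w' : V -> V -> R) s0 t0 v : s0 != v -> t0 != v ->
  (forall s t, (s, t) != (s0, t0) -> is_shortest e w s t =1 is_shortest e w' s t) ->
  BC e w v - BC e w' v = bc_term w s0 t0 v - bc_term w' s0 t0 v.
Proof.
move=> s0v t0v same; rewrite !BCE -sumrB (bigD1 s0) //=.
rewrite [X in _ + X]big1 => [|s /andP[_ ss0]]; last first.
  rewrite -sumrB big1 // => t _.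
  by rewrite (bc_term_ext _ (same _ _ _)) ?subrr // xpair_eqE (negbTE ss0).
rewrite addr0 -sumrB (bigD1 t0) //= big1 ?addr0 // => t /andP[_ tt0].
by rewrite (bc_term_ext _ (same _ _ _)) ?subrr // xpair_eqE (negbTE tt0) andbF.
Qed.

Lemma bc_term_avoid (w : V -> V -> R) s t v :
  (forall p, is_shortest e w s t p -> v \notin p) -> bc_term w s t v = 0.
Proof.
move=> avoid; rewrite /bc_term /nsp_via (eq_count (a2 := pred0)) => [|p /=].
  by rewrite count_pred0 mul0r if_same.
by case: (boolP (is_shortest _ _ _ _ _)) => //= /avoid /negbTE.
Qed.

Lemma bc_term_through (w : V -> V -> R) s t v p0 :
  p0 \in candidates V -> is_shortest e w s t p0 ->
  (forall p, is_shortest e w s t p -> v \in p) -> bc_term w s t v = 1.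
Proof.
move=> p0c sp0 through.
have pos : (0 < nsp e w s t)%N by rewrite /nsp -has_count; apply/hasP; exists p0.
rewrite /bc_term pos /nsp_via (eq_count (a2 := is_shortest e w s t)) => [|p /=].
  by rewrite divff // pnatr_eq0 -lt0n.
by case: (boolP (is_shortest _ _ _ _ _)) => //= /through.
Qed.

End Betweenness.

Lemma le_by_key (T : Type) (R : realDomainType) (P : pred T) (key f : T -> R) :
  {in P &, forall p q, key p < key q -> f p < f q} ->
  {in P &, forall p q, key p = key q -> f p = f q} ->
  {in P &, forall p q, (f p <= f q) = (key p <= key q)}.
Proof.
move=> mono inj p q Pp Pq; case: (ltgtP (key p) (key q)) => [lt|gt|eq_key].
- by rewrite ltW ?mono.
- by apply/negbTE; rewrite -ltNge mono.
- by rewrite (inj p q) // lexx.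
Qed.

Lemma cmpR_le (R : realFieldType) (x y x' y' : R) :
  (x <= y) = (x' <= y') -> (y <= x) = (y' <= x') -> cmpR x y = cmpR x' y'.
Proof. by move=> le_xy le_yx; rewrite /cmpR !ltNge !eq_le le_xy le_yx. Qed.

Section LayeredGraph.
Variable n : nat.
Local Notation V := 'I_(3 * n).

Definition layer (u : V) : nat := u %/ n.
Definition col (u : V) : nat := u %% n.
Definition larc : rel V := fun u v => (layer u < layer v)%N.

Lemma vtx_subproof (l : 'I_3) (x : 'I_n) : (l * n + x < 3 * n)%N.
Proof. by have := ltn_ord l; have := ltn_ord x; nia. Qed.

Definition vtx (l : 'I_3) (x : 'I_n) : V := Ordinal (vtx_subproof l x).

Hypothesis n_gt0 : (0 < n)%N.

Lemma layer_le2 u : (layer u <= 2)%N.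
Proof. by rewrite /layer -ltnS ltn_divLR // mulnC. Qed.

Lemma col_lt u : (col u < n)%N.
Proof. by rewrite /col ltn_pmod. Qed.

Lemma vertex_eq u v : layer u = layer v -> col u = col v -> u = v.
Proof.
move=> same_layer same_col; apply: val_inj.
by rewrite /= (divn_eq u n) (divn_eq v n) -/(layer u) -/(col u) same_layer same_col.
Qed.

Lemma larc_lt u v : larc u v -> (u < v)%N.
Proof. by move=> uv; rewrite ltnNge; apply: contraL uv => vu; rewrite -leqNgt leq_div2r. Qed.

Lemma layer_vtx l x : layer (vtx l x) = l.
Proof. by rewrite /layer /= divnMDl // divn_small ?addn0. Qed.

Lemma col_vtx l x : col (vtx l x) = x.
Proof. by rewrite /col /= modnMDl modn_small. Qed.

Variant shape : seq V -> Prop :=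
  | ShapeVertex u : shape [:: u]
  | ShapeArc u v of larc u v : shape [:: u; v]
  | ShapeTriangle a b c of layer a = 0 & layer b = 1 & layer c = 2 :
      shape [:: a; b; c].

Lemma gpathP p : gpath larc p -> shape p.
Proof.
case: p => [|a [|b [|c [|d q]]]] //= => [_|/andP[/andP[ab _] _]|/andP[arcs _]|/andP[arcs _]].
- exact: ShapeVertex.
- exact: ShapeArc.
- case/and3P: arcs => ab bc _; have := layer_le2 c; rewrite /larc in ab bc.
  by move=> c2; apply: ShapeTriangle; lia.
- case/and4P: arcs => ab bc cd _; have := layer_le2 d; rewrite /larc in ab bc cd.
  lia.
Qed.

Lemma st_paths s t p : s != t -> gpath_st larc s t p ->
  p = [:: s; t] \/
  exists2 b, [/\ layer s = 0, layer b = 1 & layer t = 2]%N & p = [:: s; b; t].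
Proof.
move=> st /and3P[/gpathP[u|u v _|a b c a0 b1 c2]] /= /eqP hs /eqP ht; subst.
- by rewrite eqxx in st.
- by left.
- by right; exists b.
Qed.

Lemma ends_lt p x : gpath larc p -> (1 < size p)%N -> (head x p < last x p)%N.
Proof.
case/gpathP=> [//|u v uv|a b c a0 _ c2] _ /=; apply: larc_lt => //.
by rewrite /larc a0 c2.
Qed.

Definition pot (u : V) : int := (2 ^ u)%:Z.
Definition span (p : seq V) : int := if p is u :: q then pot (last u q) - pot u else 0.

Lemma telescope_pot p : \sum_(xy <- zip p (behead p)) (pot xy.2 - pot xy.1) = span p.
Proof.
case: p => [|u q]; first by rewrite big_nil.
elim: q u => [|v q IH] u /=; first by rewrite big_nil subrr.
by rewrite big_cons /= (IH v) addrC addrA subrK.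
Qed.

Lemma pow2_diff_inj (a b a' b' : nat) : (a < b)%N -> (a' < b')%N ->
  (2 ^ b)%:Z - (2 ^ a)%:Z = (2 ^ b')%:Z - (2 ^ a')%:Z -> a = a' /\ b = b'.
Proof.
have gap c d : (c < d)%N -> (2 * 2 ^ c <= 2 ^ d)%N.
  by move=> cd; rewrite -expnS leq_pexp2l.
have pos c : (0 < 2 ^ c)%N by rewrite expn_gt0.
move=> ab ab' E; have ga := gap _ _ ab; have ga' := gap _ _ ab'.
have pa := pos a; have pa' := pos a'.
have eq_b : b = b'.
  case: (ltngtP b b') => [lt|gt|//]; [have := gap _ _ lt | have := gap _ _ gt]; lia.
split=> //; subst b'; apply: (@expnI 2) => //; lia.
Qed.

Lemma span_gt0 p : gpath larc p -> (0 < span p) = (1 < size p)%N.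
Proof.
case: p => [//|u [|v q] g]; first by rewrite /= subrr.
by rewrite /span subr_gt0 ltz_nat ltn_exp2l // (ends_lt u g).
Qed.

Lemma spanE p x : span p = pot (last x p) - pot (head x p).
Proof. by case: p => [|u q] /=; rewrite ?subrr. Qed.

Lemma same_span_ends p q : gpath larc p -> gpath larc q -> span p = span q ->
  (1 < size p)%N ->
  exists s t, [/\ s != t, gpath_st larc s t p & gpath_st larc s t q].
Proof.
move=> gp gq E long; have sp : 0 < span p by rewrite span_gt0.
have long' : (1 < size q)%N.
  by case: q gq E => [|u' [|v' q']] //= _ E; rewrite E ?subrr ltxx in sp.
case: p gp long E sp => [//|u p'] gp long E _.
have [eq_s eq_t] : head u q = u /\ last u q = last u p'.
  have [] := pow2_diff_inj (ends_lt u gq long') (ends_lt u gp long).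
    by rewrite -!/(pot _) -!spanE.
  by split; apply: val_inj.
exists u, (last u p'); split.
- by rewrite neq_ltn (ends_lt u gp long).
- by rewrite /gpath_st gp /= !eqxx.
- by rewrite /gpath_st gq eq_s eq_t !eqxx.
Qed.

Lemma pow4_le (j : nat) : (j < n)%N -> (4 ^ j)%:Z <= (4 ^ n)%:Z.
Proof. by move=> jn; rewrite lez_nat leq_pexp2l // ltnW. Qed.

Lemma pow4_gap (j j' : nat) : (j < j')%N -> 4 * (4 ^ j)%:Z <= (4 ^ j')%:Z.
Proof. by move=> jj; rewrite -PoszM lez_nat -expnS leq_pexp2l. Qed.

Lemma pow4_gt0 (j : nat) : 0 < (4 ^ j)%:Z.
Proof. by rewrite ltz_nat expn_gt0. Qed.

Definition triple := ('I_n * 'I_n * 'I_n)%type.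
Definition L0 : 'I_3 := @Ordinal 3 0 isT.
Definition L1 : 'I_3 := @Ordinal 3 1 isT.
Definition L2 : 'I_3 := @Ordinal 3 2 isT.

Definition src (t : triple) : V := vtx L0 t.1.1.
Definition hub (t : triple) : V := vtx L1 t.1.2.
Definition dst (t : triple) : V := vtx L2 t.2.
Definition tri (t : triple) : seq V := [:: src t; hub t; dst t].

(* The weights: entering layer 1 at column j costs a toll 5 * 4^j; the
   perturbation attached to a triangle discounts each of its two arcs by
   3 * 4^j, where j is the column of its hub: this makes it the unique
   shortest path between its ends while keeping the relative order of all
   other paths.  The dominant term scale * (pot y - pot x) telescopes along
   paths. *)
Definition toll (v : V) : int := if layer v == 1%N then 5 * (4 ^ col v)%:Z else 0.

Definition discount (t : option triple) (x y : V) : int :=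
  if t is Some t then
    if (x == src t) && (y == hub t) || (x == hub t) && (y == dst t)
    then 3 * (4 ^ col (hub t))%:Z else 0
  else 0.

Definition scale : int := 16 * (4 ^ n)%:Z.

Definition int_weight (t : option triple) (x y : V) : int :=
  scale * (pot y - pot x) + (toll y - discount t x y).

Definition surplus (t : option triple) (p : seq V) : int :=
  \sum_(xy <- zip p (behead p)) (toll xy.2 - discount t xy.1 xy.2).

Lemma pweight_int_weight t p : pweight (int_weight t) p = scale * span p + surplus t p.
Proof. by rewrite /pweight big_split /= -mulr_sumr telescope_pot. Qed.

Lemma toll_bounds v : 0 <= toll v <= 5 * (4 ^ n)%:Z.
Proof.
have := pow4_le (col_lt v); have := pow4_gt0 (col v); have := pow4_gt0 n.
by rewrite /toll; case: ifP => _; lia.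
Qed.

Lemma discount_bounds t x y : 0 <= discount t x y <= 3 * (4 ^ n)%:Z.
Proof.
have := pow4_gt0 n; case: t => [t|] /=; last by lia.
by case: ifP => _; have := pow4_le (col_lt (hub t)); have := pow4_gt0 (col (hub t)); lia.
Qed.

Lemma surplus_bounds t p : gpath larc p ->
  - (6 * (4 ^ n)%:Z) <= surplus t p <= 6 * (4 ^ n)%:Z.
Proof.
rewrite /surplus; case/gpathP=> [u|u v _|a b c _ _ c2] /=; rewrite ?big_cons big_nil /=.
- by have := pow4_gt0 n; lia.
- by have := toll_bounds v; have := discount_bounds t u v; lia.
- have toll_c : toll c = 0 by rewrite /toll c2.
  have := toll_bounds b; have := discount_bounds t a b; have := discount_bounds t b c.
  by rewrite toll_c; lia.
Qed.

Lemma vtx_neq u (l : 'I_3) x : layer u != l -> (u == vtx l x) = false.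
Proof. by apply: contraNF => /eqP ->; rewrite layer_vtx. Qed.

Lemma surplus_arc02 t a c : layer a = 0%N -> layer c = 2%N -> surplus t [:: a; c] = 0.
Proof.
move=> a0 c2; rewrite /surplus /= big_cons big_nil /toll c2 /= addr0.
case: t => [t|] //=.
by rewrite (@vtx_neq c L1) ?(@vtx_neq a L1) ?a0 ?c2 // andbF.
Qed.

Definition off_target (t : option triple) (p : seq V) : bool :=
  if t is Some t then p != tri t else true.

Lemma surplus_triangle t a b c :
  layer a = 0%N -> layer b = 1%N -> layer c = 2%N -> off_target t [:: a; b; c] ->
  2 * (4 ^ col b)%:Z <= surplus t [:: a; b; c] <= 5 * (4 ^ col b)%:Z.
Proof.
move=> a0 b1 c2 off; have pos := pow4_gt0 (col b).
rewrite /surplus /= !big_cons big_nil /= /toll b1 c2 /= addr0.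
case: t off => [t|_] /=; last by lia.
rewrite (@vtx_neq a L1) ?(@vtx_neq b L0) ?a0 ?b1 //= ?andbF /=.
case: (b =P hub t) => [bj|_] off; rewrite ?andbT ?andbF ?orbF /=; last by lia.
rewrite -bj; move: off; rewrite bj /tri.
by case: (a =P _) => [->|_]; case: (c =P _) => [->|_] //=; rewrite ?eqxx; lia.
Qed.

(* Each weight function
   orders the paths other than its perturbed triangle by rank. *)
Definition mid (p : seq V) : int := if p is [:: _; b; _] then (col b).+1%:Z else 0.
Definition rank (p : seq V) : int := span p * n.+1%:Z + mid p.

Lemma mid_bounds p : 0 <= mid p <= n%:Z.
Proof. by case: p => [|? [|b [|? []]]] //=; have := col_lt b; lia. Qed.

Lemma rank_span p q : rank p <= rank q -> span p <= span q.
Proof. by rewrite /rank; have := mid_bounds p; have := mid_bounds q; nia. Qed.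

(* Paths of equal rank are equal or both single vertices, so every weight
   function gives them the same weight. *)
Lemma pweight_rank_eq (M : nmodType) (w : V -> V -> M) p q :
  gpath larc p -> gpath larc q -> rank p = rank q -> pweight w p = pweight w q.
Proof.
move=> gp gq E.
have same_span : span p = span q by apply/eqP; rewrite eq_le !rank_span ?E.
have same_mid : mid p = mid q by move: E; rewrite /rank same_span => /addrI.
case: (boolP (1 < size p)%N) => [long|short]; last first.
  have : ~~ (1 < size q)%N by rewrite -span_gt0 // -same_span span_gt0.
  case/gpathP: gp short => // u _.
  by case/gpathP: gq.
have [s [t [st ps qs]]] := same_span_ends gp gq same_span long.
case: (st_paths st ps) same_mid => [->|[b [_ b1 _] ->]];
  case: (st_paths st qs) => [->|[b' [_ b1' _] ->]] //= [cb].
by rewrite (@vertex_eq b b') // b1 b1'.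
Qed.

Lemma pweight_rank_lt t p q : gpath larc p -> gpath larc q ->
  off_target t p -> off_target t q ->
  rank p < rank q -> pweight (int_weight t) p < pweight (int_weight t) q.
Proof.
move=> gp gq op oq lt; rewrite !pweight_int_weight.
have := surplus_bounds t gp; have := surplus_bounds t gq; have := pow4_gt0 n.
have := rank_span (ltW lt); rewrite le_eqVlt => /orP[/eqP same_span|]; last first.
  by rewrite /scale; nia.
move=> _ _ _; rewrite same_span ltrD2l.
have lt_mid : mid p < mid q by move: lt; rewrite /rank same_span ltrD2l.
have long : (1 < size q)%N.
  have : mid q != 0 by have := mid_bounds p; lia.
  by case: q {gq oq same_span lt lt_mid} => [|? [|? [|? []]]].
have [s [t' [st qs ps]]] := same_span_ends gq gp (esym same_span) long.
case: (st_paths st qs) lt_mid oq => [->|[b [s0 b1 t2] ->]] lt_mid oq.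
  by move: lt_mid; have := mid_bounds p; rewrite /=; lia.
have := surplus_triangle s0 b1 t2 oq; have := pow4_gt0 (col b).
case: (st_paths st ps) lt_mid op => [->|[b' [_ b1' _] ->]] /= lt_mid op.
  by rewrite surplus_arc02 //; lia.
have := surplus_triangle s0 b1' t2 op.
have gap := @pow4_gap (col b') (col b) (_ : (col b' < col b)%N).
by move: lt_mid; rewrite ltz_nat ltnS => /gap; lia.
Qed.

Lemma span_st s t p : gpath_st larc s t p -> span p = pot t - pot s.
Proof. by case/and3P=> _ /eqP hs /eqP ht; rewrite (spanE _ s) hs ht. Qed.

Lemma layer_src t : layer (src t) = 0%N. Proof. exact: layer_vtx. Qed.
Lemma layer_hub t : layer (hub t) = 1%N. Proof. exact: layer_vtx. Qed.
Lemma layer_dst t : layer (dst t) = 2%N. Proof. exact: layer_vtx. Qed.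

Lemma src_dst_neq t : src t != dst t.
Proof. by rewrite vtx_neq // layer_src. Qed.

Lemma tri_st t : gpath_st larc (src t) (dst t) (tri t).
Proof.
rewrite /gpath_st /gpath /tri /= /larc !layer_src !layer_hub !layer_dst /= !eqxx.
by rewrite !inE !vtx_neq ?layer_src ?layer_hub.
Qed.

Lemma direct_st t : gpath_st larc (src t) (dst t) [:: src t; dst t].
Proof.
by rewrite /gpath_st /gpath /= /larc layer_src layer_dst !eqxx inE src_dst_neq.
Qed.

Lemma tri_lightest t q : gpath_st larc (src t) (dst t) q -> q != tri t ->
  pweight (int_weight (Some t)) (tri t) < pweight (int_weight (Some t)) q.
Proof.
move=> qs qt; rewrite !pweight_int_weight (span_st qs) (span_st (tri_st t)) ltrD2l.
have -> : surplus (Some t) (tri t) = - (4 ^ col (hub t))%:Z.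
  rewrite /surplus /= !big_cons big_nil /= /toll layer_hub layer_dst /=.
  by rewrite !eqxx /= orbT; lia.
have := pow4_gt0 (col (hub t)).
case: (st_paths (src_dst_neq t) qs) qt => [->|[b [s0 b1 t2] ->]] qt.
  by rewrite surplus_arc02 ?layer_src ?layer_dst //; lia.
have := @surplus_triangle (Some t) _ _ _ s0 b1 t2 qt.
by move: (surplus _ _) => extra; lia.
Qed.

Lemma allseqs_mem (T : finType) k (s : seq T) : (size s <= k)%N -> s \in allseqs T k.
Proof.
elim: k s => [|k IH] [|x s] //= Hs; rewrite in_cons; apply/orP; right.
by apply: (allpairs_f (fun x s => x :: s)); [rewrite mem_enum | exact: IH].
Qed.

Lemma short_candidate p : (size p <= 3)%N -> p \in candidates V.
Proof.
move=> short; apply: allseqs_mem; apply: leq_trans short _.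
by rewrite card_ord leq_pmulr.
Qed.

Definition weight (R : realFieldType) (t : option triple) : V -> V -> R :=
  fun x y => (int_weight t x y)%:~R.

Lemma pweight_weight R t p : pweight (weight R t) p = (pweight (int_weight t) p)%:~R.
Proof. by rewrite /pweight mulrz_sumr. Qed.

Lemma weight_pos R t : pos_weight larc (weight R t).
Proof.
move=> x y xy; rewrite /weight ltr0z /int_weight /scale.
have : pot x < pot y by rewrite ltz_nat ltn_exp2l // larc_lt.
have := discount_bounds t x y; have := toll_bounds y; have := pow4_gt0 n.
nia.
Qed.

Lemma le_weight_rank R t p q : gpath larc p -> gpath larc q ->
  off_target t p -> off_target t q ->
  (pweight (weight R t) p <= pweight (weight R t) q) = (rank p <= rank q).
Proof.
move=> gp gq op oq; rewrite !pweight_weight ler_int.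
pose P := [pred r | gpath larc r & off_target t r].
apply: (@le_by_key _ _ P); rewrite ?inE ?gp ?op ?gq ?oq // => r r';
  rewrite !inE => /andP[gr or] /andP[gr' or'].
- exact: pweight_rank_lt.
- exact: pweight_rank_eq.
Qed.

Lemma le_perturbed R t p q : gpath larc p -> gpath larc q -> p != tri t -> q != tri t ->
  (pweight (weight R None) p <= pweight (weight R None) q) =
  (pweight (weight R (Some t)) p <= pweight (weight R (Some t)) q).
Proof. by move=> gp gq pt qt; rewrite !le_weight_rank. Qed.

Lemma shortest_elsewhere R t s u : (s, u) != (src t, dst t) ->
  is_shortest larc (weight R None) s u =1 is_shortest larc (weight R (Some t)) s u.
Proof.
move=> su; apply: shortest_ext => p q; rewrite !inE => ps qs.
have off r : gpath_st larc s u r -> r != tri t.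
  apply: contraTneq => ->; apply: contraNN su => /and3P[_ /eqP <- /eqP <-] //.
apply: le_perturbed; rewrite ?off //.
- by case/and3P: ps.
- by case/and3P: qs.
Qed.

(* Between the ends of the triangle, the unperturbed shortest path is the
   direct arc, which avoids the hub ... *)
Lemma shortest_base R t p :
  is_shortest larc (weight R None) (src t) (dst t) p -> hub t \notin p.
Proof.
case/andP=> ps /allP minimal.
have := minimal _ (short_candidate (p := [:: src t; dst t]) isT).
have [[gp _ _] [gd _ _]] := (and3P ps, and3P (direct_st t)).
rewrite direct_st /= le_weight_rank //.
rewrite /rank (span_st ps) (span_st (direct_st t)) /= lerD2l.
case: (st_paths (src_dst_neq t) ps) => [->|[b _ ->]] /=.
  by rewrite !inE !vtx_neq ?layer_hub.
by lia.
Qed.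

Lemma shortest_perturbed R t p :
  is_shortest larc (weight R (Some t)) (src t) (dst t) p = (p == tri t).
Proof.
apply/idP/eqP => [/andP[ps /allP minimal]|->].
  apply/eqP; apply: contraT => pt.
  have := minimal _ (short_candidate (p := tri t) isT).
  by rewrite tri_st /= !pweight_weight ler_int leNgt tri_lightest.
rewrite /is_shortest tri_st; apply/allP => q _; apply/implyP => qs.
rewrite !pweight_weight ler_int; have [->//|qt] := eqVneq q (tri t).
exact/ltW/tri_lightest.
Qed.

Lemma BC_gain R t :
  BC larc (weight R (Some t)) (hub t) - BC larc (weight R None) (hub t) = 1.
Proof.
rewrite (@BC_local_change _ _ _ _ _ (src t) (dst t)).
- rewrite (@bc_term_through _ _ _ _ _ _ _ (tri t)) ?short_candidate ?shortest_perturbed //.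
    by rewrite bc_term_avoid ?subr0 //; apply: shortest_base.
  by move=> p; rewrite shortest_perturbed => /eqP->; rewrite !inE eqxx orbT.
- by rewrite vtx_neq ?layer_src.
- by rewrite vtx_neq ?layer_dst.
- by move=> s u su p; rewrite (shortest_elsewhere _ su).
Qed.

Lemma tri_inj : injective tri.
Proof.
move=> [[i j] k] [[i' j'] k'] /(congr1 (map col)).
by rewrite /= !col_vtx => -[/val_inj-> /val_inj-> /val_inj->].
Qed.

Lemma card_triple : #|{: triple}| = (n ^ 3)%N.
Proof. by rewrite !card_prod !card_ord !expnS expn0 muln1 mulnA. Qed.

End LayeredGraph.

Theorem theorem2p1 (R : realFieldType) (n : nat) (hn : (1 <= n)%N) :
  exists e : rel 'I_(3 * n),
    (forall x, ~~ e x x) /\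
    forall A : strategy 'I_(3 * n),
      compares_paths R e A -> computes_BC R e A ->
      exists w : 'I_(3 * n) -> 'I_(3 * n) -> R,
        pos_weight e w /\
        forall k b, halts_with A w k b -> (n ^ 3 <= 2 * k)%N.
Proof.
exists (@larc n); split=> [u|A cmpA bcA]; first by rewrite /larc ltnn.
exists (weight R None); split=> [|k b run]; first exact: weight_pos.
rewrite leqNgt; apply/negP => few.
have [t fresh] : exists t, tri t \notin queried A (weight R None) k.
  apply: exists_missed (@tri_inj n) _.
  by rewrite card_triple; apply: leq_ltn_trans (size_queried _ _ _) few.
have run' : halts_with A (weight R (Some t)) k b.
  apply: halts_with_agree run => p q pQ qQ.
  have [gp gq] := (queried_gpath cmpA (weight_pos hn R None) pQ,
                   queried_gpath cmpA (weight_pos hn R None) qQ).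
  have [pt qt] : p != tri t /\ q != tri t.
    by split; apply: contraNneq fresh => <-.
  by apply: cmpR_le; apply: (le_perturbed hn).
have [k0 [b0 [run0 ok0]]] := bcA _ (weight_pos hn R None).
have [k1 [b1 [run1 ok1]]] := bcA _ (weight_pos hn R (Some t)).
have := BC_gain hn R t.
rewrite -ok0 -ok1 -(halts_with_unique run run0) -(halts_with_unique run' run1) subrr.
by move/eqP; rewrite eq_sym oner_eq0.
Qed.
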